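(* Let $G$ be a finitely presented group, $A$ an abelian group and $B$ a group with trivial center. There is a surjective homomorphism $G\times A\to B\times A$ if and only if there is a surjective homomorphism $G\to B$. *)

From HB Require Import structures.
From mathcomp Require Import all_boot.
Set Implicit Arguments. Unset Strict Implicit. Unset Printing Implicit Defensive.

Local Open Scope group_scope.

Definition prodg (G H : groupType) : Type := (G * H)%type.

Section Prod.
Variables G H : groupType.
Implicit Types x y z : prodg G H.
Definition prodg_mul x y : prodg G H := (x.1 * y.1, x.2 * y.2).
Definition prodg_one : prodg G H := (1, 1).
Definition prodg_inv x : prodg G H := (x.1^-1, x.2^-1).
Lemma prodg_mulA : associative prodg_mul.
Proof. by move=> [a b] [c d] [e f]; rewrite /prodg_mul /= !mulgA. Qed.
Lemma prodg_mul1 : left_id prodg_one prodg_mul.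
Proof. by move=> [a b]; rewrite /prodg_mul /= !mul1g. Qed.
Lemma prodg_mulg1 : right_id prodg_one prodg_mul.
Proof. by move=> [a b]; rewrite /prodg_mul /= !mulg1. Qed.
Lemma prodg_mulV : left_inverse prodg_one prodg_inv prodg_mul.
Proof. by move=> [a b]; rewrite /prodg_mul /prodg_inv /= !mulVg. Qed.
Lemma prodg_mulgV : right_inverse prodg_one prodg_inv prodg_mul.
Proof. by move=> [a b]; rewrite /prodg_mul /prodg_inv /= !mulgV. Qed.
HB.instance Definition _ := Choice.on (prodg G H).
HB.instance Definition _ := isGroup.Build (prodg G H)
  prodg_mulA prodg_mul1 prodg_mulg1 prodg_mulV prodg_mulgV.
End Prod.

Definition is_hom (G H : groupType) (f : G -> H) : Prop :=
  forall x y : G, f (x * y) = f x * f y.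

Definition surj (T U : Type) (f : T -> U) : Prop := forall y : U, exists x : T, f x = y.

Definition exists_surj_hom (G H : groupType) : Prop :=
  exists f : G -> H, is_hom f /\ surj f.

Definition abelian_group (A : groupType) : Prop := forall x y : A, x * y = y * x.

Definition trivial_center (B : groupType) : Prop :=
  forall z : B, (forall x : B, z * x = x * z) -> z = 1.

(* A word in the generators 'I_n: a letter (i, false) stands for x_i,
   (i, true) for x_i^-1. *)
Definition letter (n : nat) := ('I_n * bool)%type.
Definition word (n : nat) := seq (letter n).

Definition eval_letter (G : groupType) n (g : 'I_n -> G) (l : letter n) : G :=
  if l.2 then (g l.1)^-1 else g l.1.

Definition eval_word (G : groupType) n (g : 'I_n -> G) (w : word n) : G :=
  foldr (fun l acc => eval_letter g l * acc) 1 w.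

Inductive elem_step n (R : seq (word n)) : word n -> word n -> Prop :=
| step_free (u v : word n) (i : 'I_n) (b : bool) :
    elem_step R (u ++ (i, b) :: (i, ~~ b) :: v) (u ++ v)
| step_rel (u v r : word n) : r \in R -> elem_step R (u ++ r ++ v) (u ++ v).

(* Equivalence closure: two words are equal in the group < x_i | R >. *)
Inductive pres_equiv n (R : seq (word n)) : word n -> word n -> Prop :=
| peq_refl w : pres_equiv R w w
| peq_step u v : elem_step R u v -> pres_equiv R u v
| peq_sym u v : pres_equiv R u v -> pres_equiv R v u
| peq_trans u v w : pres_equiv R u v -> pres_equiv R v w -> pres_equiv R u w.

(* G is finitely presented: there are finitely many generators g_0..g_{n-1}
   generating G and finitely many relators R such that the kernel of the
   evaluation map from the free group is exactly the normal closure of R,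
   i.e. G = < g_0, ..., g_{n-1} | R >. *)
Definition finitely_presented (G : groupType) : Prop :=
  exists (n : nat) (g : 'I_n -> G) (R : seq (word n)),
    (forall x : G, exists w : word n, eval_word g w = x) /\
    (forall w : word n, eval_word g w = 1 <-> pres_equiv R w [::]).

(* A surjection f : G * A -> B * A followed by the projection onto B is a
   surjection G * A -> B.  Since A is abelian, 1 * A is central in G * A, and
   surjective homomorphisms map central elements to central elements; as B has
   trivial center, the surjection kills 1 * A and hence restricts to a
   surjection G -> B.  The converse takes f * id. *)
From HB Require Import structures.
From mathcomp Require Import all_boot.

Set Implicit Arguments.
Unset Strict Implicit.
Unset Printing Implicit Defensive.

Local Open Scope group_scope.

Definition central (G : groupType) (z : G) : Prop := forall x : G, z * x = x * z.

Lemma prodg_mulE (G H : groupType) (x y : prodg G H) :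
  x * y = (x.1 * y.1, x.2 * y.2).
Proof. by []. Qed.

Lemma is_hom_comp (G H K : groupType) (f : G -> H) (g : H -> K) :
  is_hom f -> is_hom g -> is_hom (g \o f).
Proof. by move=> hf hg x y /=; rewrite hf hg. Qed.

Lemma surj_comp (T U V : Type) (f : T -> U) (g : U -> V) :
  surj f -> surj g -> surj (g \o f).
Proof.
move=> sf sg z; have [y <-] := sg z; have [x <-] := sf y.
by exists x.
Qed.

Lemma is_hom_fst (G H : groupType) : is_hom (fun p : prodg G H => p.1).
Proof. by []. Qed.

Lemma surj_fst (G H : groupType) : surj (fun p : prodg G H => p.1).
Proof. by move=> x; exists ((x, 1) : prodg G H). Qed.

Lemma surj_hom_central (G H : groupType) (f : G -> H) (z : G) :
  is_hom f -> surj f -> central z -> central (f z).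
Proof. by move=> hf sf zC y; have [x <-] := sf y; rewrite -!hf zC. Qed.

Lemma central_prodg_abelian (G A : groupType) (a : A) :
  abelian_group A -> central ((1, a) : prodg G A).
Proof. by move=> abA [x b]; rewrite !prodg_mulE /= mul1g mulg1 abA. Qed.

Lemma exists_surj_hom_id (G : groupType) : exists_surj_hom G G.
Proof. by exists id; split=> // x; exists x. Qed.

Lemma exists_surj_hom_prodg (G1 G2 H1 H2 : groupType) :
  exists_surj_hom G1 H1 -> exists_surj_hom G2 H2 ->
  exists_surj_hom (prodg G1 G2) (prodg H1 H2).
Proof.
case=> [f1 [hf1 sf1]] [f2 [hf2 sf2]].
exists (fun p : prodg G1 G2 => ((f1 p.1, f2 p.2) : prodg H1 H2)); split.
  by move=> x y; rewrite !prodg_mulE /= hf1 hf2.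
move=> [y1 y2]; have [x1 <-] := sf1 y1; have [x2 <-] := sf2 y2.
by exists ((x1, x2) : prodg G1 G2).
Qed.

Lemma exists_surj_hom_restrict_fst (G A B : groupType) (k : prodg G A -> B) :
  is_hom k -> surj k -> (forall a : A, k (1, a) = 1) -> exists_surj_hom G B.
Proof.
move=> hk sk k1A; exists (fun g => k (g, 1)); split.
  by move=> x y; rewrite -hk prodg_mulE /= mulg1.
move=> y; have [[g a] <-] := sk y; exists g.
have -> : ((g, a) : prodg G A) = (g, 1) * (1, a) by rewrite prodg_mulE /= mulg1 mul1g.
by rewrite hk k1A mulg1.
Qed.

Theorem lemma7p21 (G A B : groupType) :
  finitely_presented G -> abelian_group A -> trivial_center B ->
  (exists_surj_hom (prodg G A) (prodg B A) <-> exists_surj_hom G B).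
Proof.
move=> _ abA tcB; split; last first.
  by move=> GB; apply: exists_surj_hom_prodg GB (exists_surj_hom_id A).
case=> f [hf sf].
pose k := (fun p : prodg B A => p.1) \o f.
have hk : is_hom k by apply: is_hom_comp hf (@is_hom_fst B A).
have sk : surj k by apply: surj_comp sf (@surj_fst B A).
apply: (exists_surj_hom_restrict_fst hk sk) => a; apply: tcB.
by apply: (surj_hom_central hk sk); apply: central_prodg_abelian.
Qed.
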